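(* Let $G=\mathrm{GL}_n$ over $L$ with diagonal torus $T$ and upper triangular Borel $B$, let $Q=M\ltimes N$, $Q'=M'\ltimes N'$ be standard parabolic subgroups and $w\in{}^{Q'}W^Q$. Let $Q^M_{w^{-1}}=M\cap w^{-1}Q'w=M_{w^{-1}}\ltimes N_{w^{-1}}$ (a standard parabolic of $M$) and $Q^{M'}_w=M'\cap wQw^{-1}=M'_w\ltimes N'_w$ (a standard parabolic of $M'$), and consider the standard parabolic subgroups $Q_{w^{-1}}=M_{w^{-1}}\ltimes(N_{w^{-1}}N)$ and $Q'_w=M'_w\ltimes(N'_wN')$ of $G$. Then for every $z\in Z_{M'}^+$, $$\delta_{Q'_w}(z)\le\delta_{Q_{w^{-1}}}(w^{-1}zw).$$ Moreover, if $w\ne1$, there exists $z\in Z_{M'}^+$ with $\delta_{Q'_w}(z)<\delta_{Q_{w^{-1}}}(w^{-1}zw)$.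
   Context: $L/\mathbf Q_p$ finite with ring of integers $\mathcal O_L$, uniformiser $\varpi_L$. $W$ is the Weyl group of $(G,T)$, $W_Q$ that of $M$, ${}^{Q'}W^Q$ the minimal length representatives of $W_{Q'}\backslash W/W_Q$. For a parabolic $P=M_P\ltimes N_P$, $\delta_P(m)=|\det(\mathrm{Ad}(m)|_{\mathrm{Lie}N_P(L)})|_L$ for $m\in M_P(L)$. $Z_{M'}^+=\{z\in Z_{M'}(L):zN'(\mathcal O_L)z^{-1}\subset N'(\mathcal O_L),\ z^{-1}\overline N'^1z\subset\overline N'^1\}$ where $\overline N'^1$ is the kernel of reduction mod $\varpi_L$ on the opposite unipotent $\overline N'(\mathcal O_L)$. Note $Z_{M'}\subset M'_w$ and $w^{-1}M'_ww=M_{w^{-1}}$. *)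

From HB Require Import structures.
From mathcomp Require Import all_boot all_order all_algebra all_fingroup.
Set Implicit Arguments. Unset Strict Implicit. Unset Printing Implicit Defensive.
Import Order.TTheory GRing.Theory Num.Theory.
Local Open Scope ring_scope.

(* Standard parabolics of GL_n are parametrised by subsets J of the simple
   roots alpha_k = e_k - e_(k+1), k : 'I_n.-1 (0-indexed coordinates). *)

Section Defs.
Variables (L : fieldType) (R : realFieldType) (n : nat).

Definition nonarch_dv_abs (absL : L -> R) (pi : L) : Prop :=
  [/\ absL 0 = 0,
      (forall x, x != 0 -> 0 < absL x),
      (forall x y, absL (x * y) = absL x * absL y),
      (forall x y, absL (x + y) <= Num.max (absL x) (absL y)) &
      [/\ 0 < absL pi, absL pi < 1 & (forall x, absL x < 1 -> absL x <= absL pi)]].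

Definition sameblk (J : {set 'I_n.-1}) (i j : 'I_n) : bool :=
  [forall k : 'I_n.-1, ((minn i j <= k) && (k < maxn i j))%N ==> (k \in J)].

(* the block of i is strictly before the block of j (root e_i - e_j in N_J) *)
Definition before (J : {set 'I_n.-1}) (i j : 'I_n) : bool :=
  ((i < j)%N && ~~ sameblk J i j).

Definition Qset (J : {set 'I_n.-1}) (g : 'M[L]_n) : bool :=
  (g \in unitmx) && [forall i, forall j, before J j i ==> (g i j == 0)].
Definition Mset (J : {set 'I_n.-1}) (g : 'M[L]_n) : bool :=
  (g \in unitmx) && [forall i, forall j, ~~ sameblk J i j ==> (g i j == 0)].
Definition Nset (J : {set 'I_n.-1}) (g : 'M[L]_n) : bool :=
  [forall i, forall j, before J i j || (g i j == (i == j)%:R)].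
Definition Nbarset (J : {set 'I_n.-1}) (g : 'M[L]_n) : bool :=
  [forall i, forall j, before J j i || (g i j == (i == j)%:R)].

Definition integral_mx (absL : L -> R) (g : 'M[L]_n) : Prop :=
  forall i j, absL (g i j) <= 1.

Definition N_O (absL : L -> R) (J : {set 'I_n.-1}) (g : 'M[L]_n) : Prop :=
  Nset J g /\ integral_mx absL g.
Definition Nbar_1 (absL : L -> R) (J : {set 'I_n.-1}) (g : 'M[L]_n) : Prop :=
  [/\ Nbarset J g, integral_mx absL g &
      forall i j, absL (g i j - (i == j)%:R) < 1].

Definition Zset (J : {set 'I_n.-1}) (z : 'M[L]_n) : Prop :=
  Mset J z /\ forall m, Mset J m -> z *m m = m *m z.

Definition Zplus (absL : L -> R) (J : {set 'I_n.-1}) (z : 'M[L]_n) : Prop :=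
  [/\ Zset J z,
      (forall x, N_O absL J x -> N_O absL J (z *m x *m invmx z)) &
      (forall x, Nbar_1 absL J x -> Nbar_1 absL J (invmx z *m x *m z))].

(* Lie N_J has basis E_p, p in rootsN J *)
Definition rootsN (J : {set 'I_n.-1}) : {set 'I_n * 'I_n} :=
  [set p | before J p.1 p.2].

(* matrix of Ad(m) : X |-> m X m^-1 restricted to Lie N_J in the basis E_p *)
Definition Ad_mx (J : {set 'I_n.-1}) (m : 'M[L]_n) : 'M[L]_#|rootsN J| :=
  \matrix_(a, b) (m (enum_val a).1 (enum_val b).1 *
                  invmx m (enum_val b).2 (enum_val a).2).

Definition delta (absL : L -> R) (J : {set 'I_n.-1}) (m : 'M[L]_n) : R :=
  absL (\det (Ad_mx J m)).

End Defs.

(* Weyl group W = S_n, w acting by the permutation matrix perm_mx w *)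
Definition Wpar (n : nat) (J : {set 'I_n.-1}) : {set 'S_n} :=
  [set s : 'S_n | [forall i, sameblk J i (s i)]].

Definition perm_length (n : nat) (s : 'S_n) : nat :=
  #|[set p : 'I_n * 'I_n | (p.1 < p.2)%N && (s p.2 < s p.1)%N]|.

Definition minrep (n : nat) (J' J : {set 'I_n.-1}) (w : 'S_n) : Prop :=
  forall u v, u \in Wpar J' -> v \in Wpar J ->
    (perm_length w <= perm_length (u * w * v)%g)%N.

(* Every z in Z_{M'}^+ is diagonal, constant on the blocks of M', with
   |z_11| <= ... <= |z_nn|.  For such z both modulus characters are products of
   the ratios |z_ii| / |z_jj| over the pairs {i, j} lying in different blocks of
   M'_w: delta_{Q'_w}(z) takes each pair in the order i < j, and
   delta_{Q_{w^-1}}(w^-1 z w) in the order w(i) < w(j).  A pair inverted by w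
   thus contributes a ratio <= 1 to the first product and its inverse >= 1 to
   the second.  If w <> 1 it has a descent w(a+1) < w(a); minimality of w in
   W_{M'} w W_M puts a and a+1 in different blocks of M', and
   z = diag(pi, ..., pi, 1, ..., 1), cut between a and a+1, makes the
   inequality strict. *)

From HB Require Import structures.
From mathcomp Require Import all_boot all_order all_algebra all_fingroup.
From mathcomp Require Import zify.
Import Order.TTheory GRing.Theory Num.Theory.
Local Open Scope ring_scope.
Set Implicit Arguments. Unset Strict Implicit. Unset Printing Implicit Defensive.

Section Blocks.
Variables (n : nat) (J : {set 'I_n.-1}).

Lemma sameblkxx i : sameblk J i i.
Proof. by apply/forallP => k; rewrite minnn maxnn; apply/implyP; lia. Qed.

Lemma sameblkC i j : sameblk J i j = sameblk J j i.
Proof. by rewrite /sameblk minnC maxnC. Qed.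

Lemma not_sameblk_boundary (a b : 'I_n) : (a <= b)%N -> ~~ sameblk J a b ->
  exists2 k : 'I_n.-1, (a <= k < b)%N & k \notin J.
Proof.
move=> ab /forallPn [k]; rewrite negb_imply (minn_idPl ab) (maxn_idPr ab).
by case/andP; exists k.
Qed.

End Blocks.

Section Matrices.
Variables (L : fieldType) (n : nat).
Implicit Types (A : 'M[L]_n) (d : 'rV[L]_n) (s : 'S_n) (J : {set 'I_n.-1}).

Lemma perm_conj_mxE s A a b :
  (perm_mx s *m A *m perm_mx s^-1) a b = A (s a) (s b).
Proof. by rewrite -row_permE -col_permE !mxE. Qed.

Definition transvection_mx (i j : 'I_n) : 'M[L]_n := 1%:M + delta_mx i j.

Lemma transvection_mxE i j a b :
  transvection_mx i j a b = (a == b)%:R + ((a == i) && (b == j))%:R.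
Proof. by rewrite !mxE. Qed.

Lemma transvection_unitmx i j : i != j -> transvection_mx i j \in unitmx.
Proof.
move=> ij; apply: (proj1 (@mulmx1_unit _ _ _ (1%:M - delta_mx i j) _)).
rewrite mulmxDl !mulmxBr !mul1mx !mulmx1 mul_delta_mx_cond.
by rewrite eq_sym (negbTE ij) mulr0n subr0 subrK.
Qed.

Lemma Mset_transvection J i j :
  i != j -> Mset J (transvection_mx i j) = sameblk J i j.
Proof.
move=> ij; rewrite /Mset transvection_unitmx //=; apply/forallP/idP.
- move=> H; apply/negPn/negP => nsb; have := forallP (H i) j.
  by rewrite nsb /= transvection_mxE (negbTE ij) !eqxx add0r oner_eq0.
- move=> sb a; apply/forallP => b; apply/implyP => nsb.
  have ab : a != b by apply: contraNneq nsb => ->; rewrite sameblkxx.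
  rewrite transvection_mxE (negbTE ab) add0r.
  have -> // : (a == i) && (b == j) = false.
  by apply/negbTE/andP => -[/eqP ai /eqP bj]; subst; rewrite sb in nsb.
Qed.

Lemma perm_conj_transvection s i j :
  perm_mx s *m transvection_mx i j *m perm_mx s^-1 =
  transvection_mx (s^-1 i)%g (s^-1 j)%g.
Proof.
apply/matrixP => a b; rewrite perm_conj_mxE !transvection_mxE (inj_eq perm_inj).
by rewrite !(canF_eq (permK s)).
Qed.

(* Testing [Mset] on transvections recovers the block structure. *)
Lemma sameblk_Mset_conjI J J' K s :
    (forall g : 'M[L]_n,
       Mset K g = Mset J g && Mset J' (perm_mx s *m g *m perm_mx s^-1)) ->
  forall i j, sameblk K i j = sameblk J i j && sameblk J' (s^-1 i)%g (s^-1 j)%g.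
Proof.
move=> HK i j; have [->|ij] := eqVneq i j; first by rewrite !sameblkxx.
by have := HK (transvection_mx i j); rewrite perm_conj_transvection !Mset_transvection
  // (inj_eq perm_inj).
Qed.

Lemma sameblk_Mset_conjVI J J' K s :
    (forall g : 'M[L]_n,
       Mset K g = Mset J g && Mset J' (perm_mx s^-1 *m g *m perm_mx s)) ->
  forall i j, sameblk K i j = sameblk J i j && sameblk J' (s i) (s j).
Proof.
move=> HK i j.
have HK' (g : 'M[L]_n) :
    Mset K g = Mset J g && Mset J' (perm_mx s^-1 *m g *m perm_mx s^-1^-1).
  by rewrite invgK HK.
by rewrite (sameblk_Mset_conjI HK') !invgK.
Qed.

Lemma mulmx_delta_mxE A i j a b :
  (A *m (delta_mx i j : 'M[L]_n)) a b = A a i * (j == b)%:R.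
Proof.
rewrite mxE (bigD1 i) //= big1 => [|k ki]; rewrite !mxE ?eqxx /=.
  by rewrite addr0 eq_sym.
by rewrite (negbTE ki) mulr0.
Qed.

Lemma delta_mx_mulE A i j a b :
  ((delta_mx i j : 'M[L]_n) *m A) a b = (a == i)%:R * A j b.
Proof.
rewrite mxE (bigD1 j) //= big1 => [|k kj]; rewrite !mxE ?eqxx /=.
  by rewrite addr0 andbT.
by rewrite (negbTE kj) andbF mul0r.
Qed.

Lemma diag_mx_unitmx d : (forall i, d 0 i != 0) -> diag_mx d \in unitmx.
Proof. by move=> nz; rewrite unitmxE det_diag unitfE; apply/prodf_neq0. Qed.

Lemma invmx_diag d : (forall i, d 0 i != 0) ->
  invmx (diag_mx d) = diag_mx (\row_i (d 0 i)^-1).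
Proof.
move=> nz; have DE : diag_mx d *m diag_mx (\row_i (d 0 i)^-1) = 1%:M.
  apply/matrixP => a b; rewrite mul_diag_mx !mxE.
  by case: eqVneq; rewrite ?mulr0 // mulfV.
by rewrite -[RHS](mulKmx (diag_mx_unitmx nz)) DE mulmx1.
Qed.

Lemma diag_conj_mxE d e A a b :
  (diag_mx d *m A *m diag_mx e) a b = d 0 a * A a b * e 0 b.
Proof. by rewrite mul_mx_diag mxE mul_diag_mx mxE. Qed.

Lemma diag_conj_natE (u v : 'rV[L]_n) a b : (forall i, u 0 i * v 0 i = 1) ->
  u 0 a * (a == b)%:R * v 0 b = (a == b)%:R.
Proof. by move=> uv; case: eqVneq => [<-|_]; rewrite ?mulr1 ?mulr0 ?mul0r. Qed.

Lemma perm_conj_diag s d :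
  perm_mx s *m diag_mx d *m perm_mx s^-1 = diag_mx (\row_i d 0 (s i)).
Proof. by apply/matrixP => a b; rewrite perm_conj_mxE !mxE (inj_eq perm_inj). Qed.

Lemma Ad_mx_diag J d : (forall i, d 0 i != 0) ->
  Ad_mx J (diag_mx d) =
  diag_mx (\row_a (d 0 (enum_val a).1 / d 0 (enum_val a).2)).
Proof.
move=> nz; apply/matrixP => a b; rewrite /Ad_mx invmx_diag // !mxE.
have [->|ab] := eqVneq a b; first by rewrite !eqxx !mulr1n.
have : enum_val a != enum_val b by apply: contra ab => /eqP/enum_val_inj ->.
case: (enum_val a) => p1 p2; case: (enum_val b) => q1 q2 /=.
have [->|] := eqVneq p1 q1; last by rewrite mulr0n mul0r.
have [->|] := eqVneq q2 p2; last by rewrite !mulr0n mulr0.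
by rewrite eqxx.
Qed.

Lemma Zset_diag J z : Zset J z ->
  exists d, [/\ z = diag_mx d, forall i, d 0 i != 0 &
                forall i j, sameblk J i j -> d 0 i = d 0 j].
Proof.
case=> /andP [Uz offz] comm.
have comm_delta i j : i != j -> sameblk J i j ->
    z *m delta_mx i j = delta_mx i j *m z.
  move=> ij sb; have := comm _ (etrans (Mset_transvection J ij) sb).
  by rewrite mulmxDr mulmxDl mulmx1 mul1mx => /addrI.
have zdiag a b : a != b -> z a b = 0.
  move=> ab; case sb: (sameblk J a b); last first.
    by apply/eqP; have := forallP (forallP offz a) b; rewrite sb.
  have := congr1 (fun M : 'M[L]_n => M a a) (comm_delta b a _ _).
  rewrite mulmx_delta_mxE delta_mx_mulE eqxx (negbTE ab) mulr1 mul0r; apply.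
    by rewrite eq_sym.
  by rewrite sameblkC.
set d := \row_i z i i.
have zd : z = diag_mx d.
  apply/matrixP => a b; rewrite !mxE.
  by have [->|ab] := eqVneq a b; rewrite ?mulr1n // zdiag // mulr0n.
exists d; split=> // [i|i j sb].
  by move: Uz; rewrite unitmxE zd det_diag unitfE => /prodf_neq0; apply.
have [<-//|ij] := eqVneq i j.
have := congr1 (fun M : 'M[L]_n => M i j) (comm_delta i j ij sb).
by rewrite mulmx_delta_mxE delta_mx_mulE !eqxx mulr1 mul1r !mxE.
Qed.

Lemma diag_Zset J d : (forall i, d 0 i != 0) ->
  (forall i j, sameblk J i j -> d 0 i = d 0 j) -> Zset J (diag_mx d).
Proof.
move=> nz dJ; split.
  rewrite /Mset diag_mx_unitmx //; apply/forallP => a; apply/forallP => b.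
  apply/implyP => nsb; rewrite mxE.
  have [ab|_] := eqVneq a b; last by rewrite mulr0n.
  by rewrite ab sameblkxx in nsb.
move=> m /andP [_ offm]; apply/matrixP => a b.
rewrite mul_diag_mx mul_mx_diag !mxE.
case sb: (sameblk J a b); first by rewrite (dJ a b sb) mulrC.
have /eqP -> : m a b == 0 by have := forallP (forallP offm a) b; rewrite sb.
by rewrite mulr0 mul0r.
Qed.

End Matrices.

Arguments transvection_mx {L n}.

Section AbsoluteValue.
Variables (L : fieldType) (R : realFieldType) (absL : L -> R) (pi : L).
Hypothesis absL_dv : nonarch_dv_abs absL pi.

Lemma absL0 : absL 0 = 0. Proof. by case: absL_dv. Qed.

Lemma absL_gt0 x : x != 0 -> 0 < absL x.
Proof. by case: absL_dv => _ gt0 _ _ _; apply: gt0. Qed.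

Lemma absLM x y : absL (x * y) = absL x * absL y.
Proof. by case: absL_dv => _ _ ->. Qed.

Lemma absL_ge0 x : 0 <= absL x.
Proof. by have [->|/absL_gt0/ltW //] := eqVneq x 0; rewrite absL0. Qed.

Lemma absL1 : absL 1 = 1.
Proof.
have h1 := absL_gt0 (oner_neq0 L).
by apply: (mulfI (lt0r_neq0 h1)); rewrite -absLM !mulr1.
Qed.

Lemma absLV x : absL x^-1 = (absL x)^-1.
Proof.
have [->|x0] := eqVneq x 0; first by rewrite invr0 absL0 invr0.
apply: (mulfI (lt0r_neq0 (absL_gt0 x0))).
by rewrite -absLM !mulfV ?absL1 // lt0r_neq0 ?absL_gt0.
Qed.

Lemma absL_natb (b : bool) : absL b%:R <= 1.
Proof. by case: b; rewrite ?absL1 ?absL0. Qed.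

Lemma absL_uniformizer : [/\ pi != 0, 0 < absL pi & absL pi < 1].
Proof.
case: absL_dv => _ _ _ _ [pi_gt0 pi_lt1 _]; split => //.
by apply: contraTneq pi_gt0 => ->; rewrite absL0 ltxx.
Qed.

Lemma absL_divr_le1 x y : y != 0 -> absL x <= absL y -> absL (x / y) <= 1.
Proof. by move=> y0 xy; rewrite absLM absLV ler_pdivrMr ?mul1r ?absL_gt0. Qed.

Variable n : nat.
Implicit Types (d : 'rV[L]_n) (J : {set 'I_n.-1}).

Lemma delta_diag J d : (forall i, d 0 i != 0) ->
  delta absL J (diag_mx d) =
  \prod_(p in rootsN J) (absL (d 0 p.1) / absL (d 0 p.2)).
Proof.
move=> nz; rewrite /delta Ad_mx_diag // det_diag.
rewrite (big_morph absL absLM absL1) [RHS]big_enum_val /=.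
by apply: eq_bigr => a _; rewrite mxE absLM absLV.
Qed.

Lemma N_O_transvection J a b : before J a b -> N_O absL J (transvection_mx a b).
Proof.
move=> ab; have nab : a != b by case/andP: ab => lt _; rewrite neq_ltn lt.
split=> [|i j]; last first.
  rewrite transvection_mxE.
  have [->|_] := eqVneq i a; have [->|_] := eqVneq j b;
    by rewrite /= ?addr0 ?absL_natb // (negbTE nab) add0r absL1.
apply/forallP => i; apply/forallP => j; rewrite transvection_mxE.
have [->|_] := eqVneq i a; have [->|_] := eqVneq j b;
  by rewrite /= ?addr0 ?eqxx ?orbT ?ab.
Qed.

Lemma Zplus_diag J z : Zplus absL J z ->
  exists d, [/\ z = diag_mx d, forall i, d 0 i != 0 &
    forall a b : 'I_n, (a < b)%N -> absL (d 0 a) <= absL (d 0 b)].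
Proof.
case=> /Zset_diag [d [-> nz dJ]] N_O_conj _; exists d; split=> // a b ab.
case sb: (sameblk J a b); first by rewrite (dJ a b sb).
have nab : a != b by rewrite neq_ltn ab.
have abJ : before J a b by rewrite /before ab sb.
have [_ /(_ a b)] := N_O_conj _ (N_O_transvection abJ).
rewrite invmx_diag // diag_conj_mxE transvection_mxE (negbTE nab) !eqxx add0r.
by rewrite mulr1 !mxE absLM absLV ler_pdivrMr ?mul1r ?absL_gt0.
Qed.

Section MonotoneDiagonal.
Variables (J : {set 'I_n.-1}) (d : 'rV[L]_n).
Hypotheses (d_neq0 : forall i, d 0 i != 0)
  (d_mono : forall a b : 'I_n, (a < b)%N -> absL (d 0 a) <= absL (d 0 b)).

Let dV i : d 0 i * (\row_j (d 0 j)^-1) 0 i = 1.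
Proof. by rewrite mxE mulfV. Qed.

Let Vd i : (\row_j (d 0 j)^-1) 0 i * d 0 i = 1.
Proof. by rewrite mxE mulVf. Qed.

Lemma N_O_diag_conj x :
  N_O absL J x -> N_O absL J (diag_mx d *m x *m invmx (diag_mx d)).
Proof.
case=> Nx Ix; rewrite invmx_diag //.
have conj_natE a b : x a b = (a == b)%:R ->
    (diag_mx d *m x *m diag_mx (\row_j (d 0 j)^-1)) a b = (a == b)%:R.
  by move=> xE; rewrite diag_conj_mxE xE diag_conj_natE.
split=> [|a b].
  apply/forallP => a; apply/forallP => b.
  case/orP: (forallP (forallP Nx a) b) => [->//|/eqP /conj_natE ->].
  by rewrite eqxx orbT.
case/orP: (forallP (forallP Nx a) b) => [/andP [ab _]|/eqP /conj_natE ->].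
  rewrite diag_conj_mxE mxE mulrAC absLM.
  by rewrite mulr_ile1 ?absL_ge0 ?absL_divr_le1 ?d_mono.
exact: absL_natb.
Qed.

Lemma Nbar_1_diag_conj x :
  Nbar_1 absL J x -> Nbar_1 absL J (invmx (diag_mx d) *m x *m diag_mx d).
Proof.
case=> Nx Ix Cx; rewrite invmx_diag //.
have conj_natE a b : x a b = (a == b)%:R ->
    (diag_mx (\row_j (d 0 j)^-1) *m x *m diag_mx d) a b = (a == b)%:R.
  by move=> xE; rewrite diag_conj_mxE xE diag_conj_natE.
have conj_lowE a b : (diag_mx (\row_j (d 0 j)^-1) *m x *m diag_mx d) a b =
    x a b * (d 0 b / d 0 a).
  by rewrite diag_conj_mxE mxE mulrAC mulrC [_^-1 * _]mulrC.
have conj_lowP (a b : 'I_n) :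
    (b < a)%N -> absL (x a b * (d 0 b / d 0 a)) <= absL (x a b).
  move=> ba; rewrite absLM ler_piMr ?absL_ge0 ?absL_divr_le1 ?d_mono //.
split=> [|a b|a b].
- apply/forallP => a; apply/forallP => b.
  case/orP: (forallP (forallP Nx a) b) => [->//|/eqP /conj_natE ->].
  by rewrite eqxx orbT.
- case/orP: (forallP (forallP Nx a) b) => [/andP [ba _]|/eqP /conj_natE ->].
    by rewrite conj_lowE (le_trans (conj_lowP _ _ ba)).
  exact: absL_natb.
case/orP: (forallP (forallP Nx a) b) => [/andP [ba _]|/eqP /conj_natE ->].
  have /negbTE ab : a != b by rewrite neq_ltn ba orbT.
  have := Cx a b; rewrite conj_lowE ab !subr0; exact: le_lt_trans (conj_lowP _ _ ba).
by rewrite subrr absL0 ltr01.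
Qed.

Lemma diag_Zplus :
  (forall i j, sameblk J i j -> d 0 i = d 0 j) -> Zplus absL J (diag_mx d).
Proof.
split; [exact: diag_Zset | exact: N_O_diag_conj | exact: Nbar_1_diag_conj].
Qed.

End MonotoneDiagonal.

Lemma delta_perm_conj_diag J (w : 'S_n) d : (forall i, d 0 i != 0) ->
  delta absL J (perm_mx w^-1 *m diag_mx d *m perm_mx w) =
  \prod_(p : 'I_n * 'I_n | before J (w p.1) (w p.2))
    (absL (d 0 p.1) / absL (d 0 p.2)).
Proof.
move=> nz; rewrite -{2}[w]invgK perm_conj_diag delta_diag => [|i]; last by rewrite mxE.
rewrite (reindex_inj (h := fun p : 'I_n * 'I_n => (w p.1, w p.2))) /=; last first.
  by move=> [? ?] [? ?] [/perm_inj -> /perm_inj ->].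
by apply: eq_big => [p|p _]; rewrite ?inE // !mxE !permK.
Qed.

Definition cut_row (k : nat) : 'rV[L]_n := \row_i (if (i <= k)%N then pi else 1).

Lemma cut_row_neq0 k i : cut_row k 0 i != 0.
Proof.
by have [pi0 _ _] := absL_uniformizer; rewrite mxE; case: ifP; rewrite ?oner_eq0.
Qed.

Lemma absL_cut_row_le k (a b : 'I_n) : (a < b)%N ->
  absL (cut_row k 0 a) <= absL (cut_row k 0 b).
Proof.
have [_ _ pi_lt1] := absL_uniformizer.
move=> ab; rewrite !mxE; case: (leqP a k); case: (leqP b k) => // bk ak.
  by rewrite absL1 ltW.
lia.
Qed.

Lemma absL_cut_row_lt k (a b : 'I_n) : (a <= k < b)%N ->
  absL (cut_row k 0 a) < absL (cut_row k 0 b).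
Proof.
have [_ _ pi_lt1] := absL_uniformizer.
by case/andP=> ak kb; rewrite !mxE ak leqNgt kb absL1.
Qed.

Lemma Zplus_cut J (k : 'I_n.-1) : k \notin J -> Zplus absL J (diag_mx (cut_row k)).
Proof.
move=> kJ; apply: diag_Zplus => [i|a b|i j ij].
- exact: cut_row_neq0.
- exact: absL_cut_row_le.
have k_out : ~~ (minn i j <= k < maxn i j)%N.
  by apply: contra kJ => /(implyP (forallP ij k)).
by rewrite !mxE; case: (leqP i k); case: (leqP j k) => // ? ?; case/negP: k_out; lia.
Qed.

End AbsoluteValue.

Arguments cut_row {L} pi {n} k.

Section RatioProducts.
Variables (R : realFieldType) (n : nat) (c : 'I_n -> R).
Variables (X : pred ('I_n * 'I_n)) (w : 'S_n).
Hypotheses (c_gt0 : forall i, 0 < c i)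
  (c_mono : forall a b : 'I_n, (a < b)%N -> c a <= c b).
Implicit Types p : 'I_n * 'I_n.

Let F p := c p.1 / c p.2.
Let kept :=
  \prod_(p : 'I_n * 'I_n | [&& (p.1 < p.2)%N, X p & (w p.1 < w p.2)%N]) F p.
Let lost :=
  \prod_(p : 'I_n * 'I_n | [&& (p.1 < p.2)%N, X p & ~~ (w p.1 < w p.2)%N]) F p.
Let gained :=
  \prod_(p : 'I_n * 'I_n | [&& (w p.1 < w p.2)%N, X p & ~~ (p.1 < p.2)%N]) F p.

Let F_gt0 p : 0 < F p. Proof. by rewrite divr_gt0. Qed.

Let F_le1 p : (p.1 < p.2)%N -> F p <= 1.
Proof. by move=> lt; rewrite ler_pdivrMr // mul1r c_mono. Qed.

Let prod_kept_lost :
  \prod_(p : 'I_n * 'I_n | (p.1 < p.2)%N && X p) F p = kept * lost.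
Proof.
rewrite (bigID (fun p : 'I_n * 'I_n => w p.1 < w p.2)%N).
by congr (_ * _); apply: eq_bigl => p; rewrite andbA.
Qed.

Let prod_kept_gained :
  \prod_(p : 'I_n * 'I_n | (w p.1 < w p.2)%N && X p) F p = kept * gained.
Proof.
rewrite (bigID (fun p : 'I_n * 'I_n => p.1 < p.2)%N).
congr (_ * _); apply: eq_bigl => p; last by rewrite andbA.
by rewrite andbC (andbC (w p.1 < w p.2)%N).
Qed.

Let lost_le1 : lost <= 1.
Proof. by apply: prodr_ile1 => p /and3P [lt _ _]; rewrite (ltW (F_gt0 p)) F_le1. Qed.

Let gained_ge1 : 1 <= gained.
Proof.
apply: (big_ind (fun x => 1 <= x)) => //; first exact: mulr_ege1.
move=> p /and3P [wlt _ nlt].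
have ne : (p.1 : nat) != p.2 by apply: contraTneq wlt => /val_inj ->; rewrite ltnn.
by rewrite ler_pdivlMr // mul1r c_mono // ltn_neqAle eq_sym ne leqNgt.
Qed.

Lemma prod_ratio_perm_le :
  \prod_(p : 'I_n * 'I_n | (p.1 < p.2)%N && X p) (c p.1 / c p.2) <=
  \prod_(p : 'I_n * 'I_n | (w p.1 < w p.2)%N && X p) (c p.1 / c p.2).
Proof.
rewrite -/F prod_kept_lost prod_kept_gained ler_pM2l ?prodr_gt0 //.
exact: le_trans gained_ge1.
Qed.

Lemma prod_ratio_perm_lt (a b : 'I_n) : (a < b)%N -> X (a, b) -> (w b < w a)%N ->
  c a < c b ->
  \prod_(p : 'I_n * 'I_n | (p.1 < p.2)%N && X p) (c p.1 / c p.2) <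
  \prod_(p : 'I_n * 'I_n | (w p.1 < w p.2)%N && X p) (c p.1 / c p.2).
Proof.
move=> ab Xab wba cab; rewrite -/F prod_kept_lost prod_kept_gained.
rewrite ltr_pM2l ?prodr_gt0 //; apply: lt_le_trans gained_ge1.
rewrite /lost (bigD1 (a, b)) /=; last by rewrite ab Xab -leqNgt ltnW.
apply: (@le_lt_trans _ _ (F (a, b))); last by rewrite ltr_pdivrMr ?mul1r.
rewrite ler_piMr ?(ltW (F_gt0 _)) //.
by apply: prodr_ile1 => p /andP [/and3P [lt _ _] _]; rewrite (ltW (F_gt0 p)) F_le1.
Qed.

End RatioProducts.

Section ModulusCharacters.
Variables (L : fieldType) (R : realFieldType) (absL : L -> R) (pi : L).
Hypothesis absL_dv : nonarch_dv_abs absL pi.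
Variables (n : nat) (J1 J2 : {set 'I_n.-1}) (w : 'S_n).
Hypothesis sameblk12 : forall i j, sameblk J1 (w i) (w j) = sameblk J2 i j.
Variable d : 'rV[L]_n.
Hypotheses (d_neq0 : forall i, d 0 i != 0)
  (d_mono : forall a b : 'I_n, (a < b)%N -> absL (d 0 a) <= absL (d 0 b)).

Let absd_gt0 i : 0 < absL (d 0 i).
Proof. exact: (absL_gt0 absL_dv (d_neq0 i)). Qed.

Let delta2E : delta absL J2 (diag_mx d) =
  \prod_(p : 'I_n * 'I_n | (p.1 < p.2)%N && ~~ sameblk J2 p.1 p.2)
    (absL (d 0 p.1) / absL (d 0 p.2)).
Proof. by rewrite (delta_diag absL_dv) //; apply: eq_bigl => p; rewrite inE. Qed.

Let delta1E : delta absL J1 (perm_mx w^-1 *m diag_mx d *m perm_mx w) =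
  \prod_(p : 'I_n * 'I_n | (w p.1 < w p.2)%N && ~~ sameblk J2 p.1 p.2)
    (absL (d 0 p.1) / absL (d 0 p.2)).
Proof.
rewrite (delta_perm_conj_diag absL_dv) //.
by apply: eq_bigl => p; rewrite /before sameblk12.
Qed.

Lemma delta_diag_le_perm_conj :
  delta absL J2 (diag_mx d) <= delta absL J1 (perm_mx w^-1 *m diag_mx d *m perm_mx w).
Proof.
rewrite delta2E delta1E.
exact: (@prod_ratio_perm_le _ _ _ (fun p => ~~ sameblk J2 p.1 p.2) w absd_gt0 d_mono).
Qed.

Lemma delta_diag_lt_perm_conj (a b : 'I_n) : (a < b)%N -> ~~ sameblk J2 a b ->
  (w b < w a)%N -> absL (d 0 a) < absL (d 0 b) ->
  delta absL J2 (diag_mx d) < delta absL J1 (perm_mx w^-1 *m diag_mx d *m perm_mx w).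
Proof.
move=> ab nab wba dab; rewrite delta2E delta1E.
exact: (@prod_ratio_perm_lt _ _ _ (fun p => ~~ sameblk J2 p.1 p.2) w absd_gt0
  d_mono a b).
Qed.

End ModulusCharacters.

Section Permutations.
Variable n : nat.
Implicit Types (w : 'S_n) (J : {set 'I_n.-1}).

Lemma perm_descent w : w != 1%g ->
  exists a b : 'I_n, (b : nat) = a.+1 /\ (w b < w a)%N.
Proof.
move=> w1; have [/existsP [a /existsP [b /andP [/eqP eb wba]]]|] :=
  boolP [exists a : 'I_n, exists b : 'I_n, (b == a.+1 :> nat) && (w b < w a)%N].
  by exists a, b.
move/existsPn => no_descent; case/eqP: w1; apply/permP => j.
have ascent (a b : 'I_n) : (b : nat) = a.+1 -> (w a < w b)%N.
  move=> eb; have /existsPn/(_ b) := no_descent a.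
  rewrite eb eqxx /= -leqNgt leq_eqVlt => /orP [/eqP/val_inj/perm_inj ab|//].
  by move: eb; rewrite ab; lia.
have w_ge k (i : 'I_n) : (i : nat) = k -> (k <= w i)%N.
  elim: k i => [//|k IHk] i ei.
  have kn : (k < n)%N by have := ltn_ord i; lia.
  by have := ascent (Ordinal kn) i ei; have := IHk (Ordinal kn) erefl; lia.
have w_le k (i : 'I_n) : (i + k = n.-1)%N -> (w i <= i)%N.
  elim: k i => [|k IHk] i ei; first by have := ltn_ord (w i); lia.
  have kn : (i.+1 < n)%N by lia.
  have IH : (w (Ordinal kn) <= i.+1)%N by apply: IHk => /=; lia.
  by have := ascent i (Ordinal kn) erefl; lia.
apply/val_inj/eqP; rewrite perm1 eqn_leq (w_le (n.-1 - j)%N) ?(w_ge j) //.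
by have := ltn_ord j; lia.
Qed.

Lemma tperm_adjacent_ltn (a b x y : 'I_n) : (b : nat) = a.+1 ->
  (x < y)%N -> (x, y) != (a, b) -> (tperm a b x < tperm a b y)%N.
Proof.
move=> eb xy; rewrite xpair_eqE -!val_eqE /= !permE /=.
by case: (x =P a); case: (y =P b); case: (x =P b); case: (y =P a) => /=;
  move=> *; subst; lia.
Qed.

Lemma perm_length_tperm_descent w (a b : 'I_n) : (b : nat) = a.+1 ->
  (w b < w a)%N -> (perm_length (tperm a b * w) < perm_length w)%N.
Proof.
move=> eb wba; set s := tperm a b.
set I1 := [set p : 'I_n * 'I_n | (p.1 < p.2)%N && ((s * w)%g p.2 < (s * w)%g p.1)%N].
set I2 := [set p : 'I_n * 'I_n | (p.1 < p.2)%N && (w p.2 < w p.1)%N].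
change (#|I1| < #|I2|)%N.
pose swap p := (s p.1, s p.2).
have swap_inj : injective swap by move=> [? ?] [? ?] [/perm_inj -> /perm_inj ->].
have I1_sub : I1 \subset swap @^-1: (I2 :\ (a, b)).
  apply/subsetP => -[x y]; rewrite !inE /= !permM => /andP [xy wyx].
  have ne : (x, y) != (a, b).
    by apply: contraTneq wyx => -[-> ->]; rewrite /s tpermL tpermR -leqNgt ltnW.
  rewrite wyx tperm_adjacent_ltn // !andbT; apply/eqP => -[sx sy].
  move: xy; rewrite -[x](tpermK a b) -[y](tpermK a b) -/s sx sy /s tpermL tpermR.
  by rewrite eb ltnNge leqnSn.
have := subset_leq_card I1_sub; rewrite card_preimset // (cardsD1 (a, b) I2).
by rewrite inE /= wba eb ltnSn.
Qed.

Lemma minrep_descent_not_sameblk J' J w (a b : 'I_n) : minrep J' J w ->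
  (b : nat) = a.+1 -> (w b < w a)%N -> ~~ sameblk J' a b.
Proof.
move=> w_min eb wba; apply/negP => ab.
have tab_in : tperm a b \in Wpar J'.
  rewrite inE; apply/forallP => i.
  by case: tpermP => [->|->|_ _]; rewrite ?sameblkxx // sameblkC.
have one_in : (1 : 'S_n)%g \in Wpar J.
  by rewrite inE; apply/forallP => i; rewrite perm1 sameblkxx.
have := w_min _ _ tab_in one_in; rewrite mulg1 leqNgt.
by rewrite perm_length_tperm_descent.
Qed.

End Permutations.

Unset Implicit Arguments.
Set Strict Implicit.

Theorem lemma4p18 (L : fieldType) (R : realFieldType) (absL : L -> R) (pi : L)
    (n : nat) (J J' J1 J2 : {set 'I_n.-1}) (w : 'S_n) :
  nonarch_dv_abs absL pi ->
  minrep J' J w ->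
  (* Q_{w^-1} = M_{w^-1} |x (N_{w^-1} N), with
     M_{w^-1} = M cap w^-1 M' w and N_{w^-1} = M cap w^-1 N' w *)
  (forall g : 'M[L]_n, Mset J1 g =
     Mset J g && Mset J' (perm_mx w *m g *m perm_mx w^-1)) ->
  (forall g : 'M[L]_n, Nset J1 g <->
     exists a b, [/\ Mset J a, Nset J' (perm_mx w *m a *m perm_mx w^-1),
                     Nset J b & g = a *m b]) ->
  (* Q'_w = M'_w |x (N'_w N'), with
     M'_w = M' cap w M w^-1 and N'_w = M' cap w N w^-1 *)
  (forall g : 'M[L]_n, Mset J2 g =
     Mset J' g && Mset J (perm_mx w^-1 *m g *m perm_mx w)) ->
  (forall g : 'M[L]_n, Nset J2 g <->
     exists a b, [/\ Mset J' a, Nset J (perm_mx w^-1 *m a *m perm_mx w),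
                     Nset J' b & g = a *m b]) ->
  (forall z : 'M[L]_n, Zplus absL J' z ->
     delta absL J2 z <= delta absL J1 (perm_mx w^-1 *m z *m perm_mx w)) /\
  (w != 1%g -> exists z : 'M[L]_n, Zplus absL J' z /\
     delta absL J2 z < delta absL J1 (perm_mx w^-1 *m z *m perm_mx w)).
Proof.
move=> absL_dv w_min M1E _ M2E _.
have sameblk2 := sameblk_Mset_conjVI M2E.
have sameblk12 i j : sameblk J1 (w i) (w j) = sameblk J2 i j.
  by rewrite (sameblk_Mset_conjI M1E) sameblk2 !permK andbC.
split=> [z /(Zplus_diag absL_dv) [d [-> d_neq0 d_mono]] | w1].
  exact: (delta_diag_le_perm_conj absL_dv sameblk12 d_neq0 d_mono).
have [a [b [eb wba]]] := perm_descent w1.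
have nab := minrep_descent_not_sameblk w_min eb wba.
have ab : (a < b)%N by rewrite eb.
have [k akb kJ'] := not_sameblk_boundary (ltnW ab) nab.
exists (diag_mx (cut_row pi k)); split; first exact: Zplus_cut.
apply: (delta_diag_lt_perm_conj absL_dv sameblk12 (cut_row_neq0 absL_dv k)
          (absL_cut_row_le absL_dv k) ab) => //.
  by rewrite sameblk2 (negbTE nab).
exact: (absL_cut_row_lt absL_dv akb).
Qed.
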